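(* Consider the FlexPD-C iterates described in the context with integer $T\ge1$, let $C=\sum_{t=0}^{T-1}(I-\alpha B)^t$, $M=C^{-1}(I-\alpha B)^T$, $z^k=\begin{bmatrix}x^k\\ \lambda^k\end{bmatrix}$, $z^*=\begin{bmatrix}x^*\\ \lambda^*\end{bmatrix}$ and $\mathcal G_C=\begin{bmatrix}M&0\\0&\frac{\alpha}{\beta}I\end{bmatrix}$. Let $0<\eta_4<2m$. If \[0<\beta<\frac{2m-\eta_4}{\rho(A'A)}\quad\text{and}\quad 0<\alpha<\frac{1-\Big(\frac{L^2}{L^2+\eta_4\rho(B)}\Big)^{1/T}}{\rho(B)},\] then there exists $\delta_C>0$ such that for all $k\ge0$, \[\|z^{k+1}-z^*\|_{\mathcal G_C}^2\le\frac{1}{1+\delta_C}\|z^k-z^*\|_{\mathcal G_C}^2,\] that is, $\|z^k-z^*\|_{\mathcal G_C}$ converges Q-linearly to $0$ and consequently $\|x^k-x^*\|_M$ converges R-linearly to $0$.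
   Context: Setting: $n$ agents are connected by a connected undirected graph with edge set $\mathcal E$, $\epsilon=|\mathcal E|$. For $x\in\mathbb R^n$ let $f(x)=\sum_{i=1}^n f_i(x_i)$, where each $f_i:\mathbb R\to\mathbb R$ is twice differentiable with $m\le f_i''\le L$ for constants $0<m\le L$; $\nabla f(x)=(f_1'(x_1),\dots,f_n'(x_n))'$. $A\in\mathbb R^{\epsilon\times n}$ is the edge–node incidence matrix (null space spanned by the all-ones vector). $B\in\mathbb R^{n\times n}$ is symmetric positive semidefinite with the same null space as $A$ (so $B\neq0$), off-diagonal entries nonzero only on edges. $x^*$ is the unique minimizer of $f$ subject to $Ax=0$ and $\lambda^*$ a Lagrange multiplier with $\nabla f(x^* )+A'\lambda^*=0$, $Ax^*=0$, $Bx^*=0$, chosen in the column space of $A$. FlexPD-C: given $\alpha,\beta>0$, $T\ge1$, $x^0$ arbitrary, $\lambda^0=0$; for $k\ge0$: $x^{k+1,0}=x^k$; for $t=1,\dots,T$, $x^{k+1,t}=x^{k+1,t-1}-\alpha\nabla f(x^k)-\alpha A'\lambda^k-\alpha Bx^{k+1,t-1}$; then $x^{k+1}=x^{k+1,T}$, $\lambda^{k+1}=\lambda^k+\beta Ax^{k+1}$. Notation: $\rho(S)$ largest eigenvalue of symmetric $S$; $\|v\|_S^2=v'Sv$; $\|\cdot\|$ Euclidean norm. *)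

From HB Require Import structures.
From mathcomp Require Import all_boot all_order all_algebra.
From mathcomp Require Import all_classical all_reals all_analysis.
Set Implicit Arguments. Unset Strict Implicit. Unset Printing Implicit Defensive.
Import Order.TTheory GRing.Theory Num.Theory.
Local Open Scope ring_scope.

Section FlexPD.
Variable R : realType.

(* An undirected graph on nodes 'I_n with eps edges, edge e joining the two
   distinct nodes (E e).1 and (E e).2 (the pair fixes an arbitrary orientation). *)
Definition adj n eps (E : 'I_eps -> 'I_n * 'I_n) : rel 'I_n :=
  fun i j => [exists e, (E e == (i, j)) || (E e == (j, i))].

Definition simple_graph n eps (E : 'I_eps -> 'I_n * 'I_n) : Prop :=
  (forall e, (E e).1 != (E e).2) /\
  (forall e1 e2, (E e1 == E e2) || (E e1 == ((E e2).2, (E e2).1)) -> e1 = e2).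

Definition connected_graph n eps (E : 'I_eps -> 'I_n * 'I_n) : Prop :=
  forall i j, connect (adj E) i j.

Definition incidence n eps (E : 'I_eps -> 'I_n * 'I_n) : 'M[R]_(eps, n) :=
  \matrix_(e, i) (if i == (E e).1 then 1 else if i == (E e).2 then -1 else 0).

Definition is_largest_eig n (S : 'M[R]_n) (r : R) : Prop :=
  eigenvalue S r /\ (forall a, eigenvalue S a -> a <= r).

Definition wnorm2 n (S : 'M[R]_n) (v : 'cV[R]_n) : R := (v^T *m S *m v) 0 0.

Definition fsum n (f : 'I_n -> R -> R) (x : 'cV[R]_n) : R := \sum_i f i (x i 0).

Definition gradf n (f : 'I_n -> R -> R) (x : 'cV[R]_n) : 'cV[R]_n :=
  \col_i (derive1 (f i) (x i 0)).

Definition flexpd_step n eps (f : 'I_n -> R -> R) (A : 'M[R]_(eps, n)) (B : 'M[R]_n)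
  (alpha beta : R) (T : nat) (z : 'cV[R]_n * 'cV[R]_eps) : 'cV[R]_n * 'cV[R]_eps :=
  let: (x, lam) := z in
  let x' := iter T (fun y => y - alpha *: gradf f x - alpha *: (A^T *m lam)
                               - alpha *: (B *m y)) x in
  (x', lam + beta *: (A *m x')).

Definition flexpd n eps (f : 'I_n -> R -> R) (A : 'M[R]_(eps, n)) (B : 'M[R]_n)
  (alpha beta : R) (T : nat) (x0 : 'cV[R]_n) (k : nat) : 'cV[R]_n * 'cV[R]_eps :=
  iter k (flexpd_step f A B alpha beta T) (x0, 0).

Definition Cmat n (B : 'M[R]_n) (alpha : R) (T : nat) : 'M[R]_n :=
  \sum_(t < T) (1%:M - alpha *: B) ^+ t.

Definition Mmat n (B : 'M[R]_n) (alpha : R) (T : nat) : 'M[R]_n :=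
  invmx (Cmat B alpha T) *m (1%:M - alpha *: B) ^+ T.

Definition GCmat n eps (B : 'M[R]_n) (alpha beta : R) (T : nat) : 'M[R]_(n + eps) :=
  block_mx (Mmat B alpha T) 0 0 ((alpha / beta)%:M).

Definition GCdist2 n eps (B : 'M[R]_n) (alpha beta : R) (T : nat)
  (z zs : 'cV[R]_n * 'cV[R]_eps) : R :=
  wnorm2 (GCmat eps B alpha beta T) (col_mx (z.1 - zs.1) (z.2 - zs.2)).

End FlexPD.

From HB Require Import structures.
From mathcomp Require Import all_boot all_order all_algebra.
From mathcomp Require Import all_classical all_reals all_analysis.
From mathcomp Require Import ring lra.
From mathcomp Require Import spectral sesquilinear.
From mathcomp Require complex.
Set Implicit Arguments. Unset Strict Implicit. Unset Printing Implicit Defensive.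
Import Order.TTheory GRing.Theory Num.Theory.
Local Open Scope ring_scope.

(* Write e = x^k - x*, mu = lambda^k - lambda*.  By the mean value theorem the
   gradient difference is D e with D diagonal and m <= D <= L, and since
   C^-1 = M + alpha B, the FlexPD-C step becomes the error recursion
     M (e' - e) + alpha B e' + alpha D e + alpha A' mu = 0,   mu' = mu + beta A e'.
   Pairing the first equation with e' shows that V = |e|_M^2 + (alpha/beta) |mu|^2
   decreases by at least c (|e' - e|^2 + |e'|^2), and c > 0 by the step-size
   conditions: the bound on alpha says that alpha L^2 / eta4 lies below the
   smallest eigenvalue b^T / sum_(t<T) b^t of M, where b = 1 - alpha rho(B), and
   the bound on beta says beta rho(A'A) < 2m - eta4.  Conversely mu' lies in the range
   of A, on which A' is injective, so |mu'| is controlled by |A' mu'|, which the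
   recursion bounds by |e' - e| and |e'|.  Hence V' <= K (|e' - e|^2 + |e'|^2), and
   together V' <= (1 + c/K)^-1 V.  Inequalities between quadratic forms of
   polynomials in a symmetric matrix reduce, by the spectral theorem, to scalar
   inequalities at its eigenvalues. *)

Section RealSymmetricSpectral.
Import complex Num.Def.
Local Open Scope complex_scope.
Variable R : realType.
Local Notation toC := (real_complex R).

Lemma conj_real_complex (x : R) : conjC (toC x) = toC x.
Proof. by apply/conj_Creal; rewrite complex_real. Qed.

(* [w i] is the squared modulus of the i-th coordinate of [v] in an orthonormal
   eigenbasis of the complexification of [S]. *)
Lemma sym_wnorm2_spectral n (S : 'M[R]_n.+1) : S^T = S ->
  exists d : 'I_n.+1 -> R, (forall i, eigenvalue S (d i)) /\
   forall v : 'cV[R]_n.+1, exists w : 'I_n.+1 -> R, (forall i, 0 <= w i) /\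
     forall p : {poly R}, wnorm2 (horner_mx S p) v = \sum_i p.[d i] * w i.
Proof.
move=> S_sym; pose SC := map_mx toC S.
have SC_herm : SC \is hermsymmx.
  apply/is_hermitianmxP; rewrite expr0 scale1r.
  by apply/matrixP => i j; rewrite !mxE conj_real_complex -[in LHS]S_sym mxE.
have /orthomx_spectralP SCE := hermitian_normalmx SC_herm.
have /mxOverP sp_real := hermitian_spectral_diag_real SC_herm.
set P := spectralmx SC in SCE; set sp := spectral_diag SC in SCE sp_real.
have P_unitary : P \is unitarymx by exact: spectral_unitarymx.
have P_unit : P \in unitmx by exact: spectral_unit.
pose d i := Re (sp 0 i).
have spE i : sp 0 i = toC (d i).
  by rewrite /d; have := sp_real 0 i; case: (sp 0 i) => a b; rewrite complex_real => /eqP ->.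
exists d; split.
  move=> i; rewrite -(eigenvalue_map toC).
  suff: eigenvalue SC (sp 0 i) by rewrite spE; apply.
  apply/eigenvalueP; exists (row i P).
    by rewrite SCE !mulmxA -row_mul mulmxV // row1 -rowE row_diag_mx -scalemxAl -rowE.
  apply/eqP => /(congr1 (fun r => r *m invmx P)).
  rewrite -row_mul mulmxV // mul0mx row1 => /rowP /(_ i).
  by rewrite !mxE => /eqP; rewrite eqxx /= [i == i]eqxx oner_eq0.
move=> v; pose vC := map_mx toC v; pose z := P *m vC.
have vC_real : map_mx conjC vC = vC by apply/matrixP => i j; rewrite !mxE conj_real_complex.
exists (fun i => Re (z i 0) ^+ 2 + Im (z i 0) ^+ 2); split.
  by move=> i; rewrite addr_ge0 ?sqr_ge0.
move=> p; apply: complexI.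
have -> : toC (wnorm2 (horner_mx S p) v)
    = (vC^T *m horner_mx SC (map_poly toC p) *m vC) 0 0.
  by rewrite /wnorm2 -map_horner_mx map_trmx -!map_mxM [in RHS]mxE.
rewrite SCE horner_mx_uconjC // horner_mx_diag invmx_unitary //.
have zC : vC^T *m (P^t*)%sesqui = (map_mx conjC z)^T.
  by rewrite /z map_mxM trmx_mul vC_real; congr (_ *m _); apply/matrixP=> i j; rewrite !mxE.
rewrite !mulmxA zC -mulmxA -/z mxE rmorph_sum; apply: eq_bigr => i _.
rewrite mul_mx_diag !mxE spE horner_map rmorphM /= add_Re2_Im2 normCKC.
by rewrite mulrAC mulrC.
Qed.

End RealSymmetricSpectral.

Section Vdot.
Variable R : realType.

Definition vdot n (u v : 'cV[R]_n) : R := (u^T *m v) 0 0.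
Definition sqnorm n (u : 'cV[R]_n) : R := vdot u u.

Lemma vdotE n (u v : 'cV[R]_n) : vdot u v = \sum_i u i 0 * v i 0.
Proof. by rewrite /vdot mxE; apply: eq_bigr => i _; rewrite mxE. Qed.

Lemma vdotC n (u v : 'cV[R]_n) : vdot u v = vdot v u.
Proof. by rewrite !vdotE; apply: eq_bigr => i _; rewrite mulrC. Qed.

Lemma vdotDr n (u v w : 'cV[R]_n) : vdot u (v + w) = vdot u v + vdot u w.
Proof. by rewrite !vdotE -big_split; apply: eq_bigr => i _; rewrite mxE mulrDr. Qed.

Lemma vdotZr n a (u v : 'cV[R]_n) : vdot u (a *: v) = a * vdot u v.
Proof. by rewrite !vdotE mulr_sumr; apply: eq_bigr => i _; rewrite mxE mulrCA. Qed.

Lemma vdotNr n (u v : 'cV[R]_n) : vdot u (- v) = - vdot u v.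
Proof. by rewrite -scaleN1r vdotZr mulN1r. Qed.

Lemma vdotBr n (u v w : 'cV[R]_n) : vdot u (v - w) = vdot u v - vdot u w.
Proof. by rewrite vdotDr vdotNr. Qed.

Lemma vdotDl n (u v w : 'cV[R]_n) : vdot (v + w) u = vdot v u + vdot w u.
Proof. by rewrite vdotC vdotDr !(vdotC u). Qed.

Lemma vdotZl n a (u v : 'cV[R]_n) : vdot (a *: v) u = a * vdot v u.
Proof. by rewrite vdotC vdotZr vdotC. Qed.

Lemma vdotBl n (u v w : 'cV[R]_n) : vdot (v - w) u = vdot v u - vdot w u.
Proof. by rewrite !(vdotC _ u) vdotBr. Qed.

Lemma vdot0r n (u : 'cV[R]_n) : vdot u 0 = 0.
Proof. by rewrite -(scale0r 0) vdotZr mul0r. Qed.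

Lemma vdot_mulmx p n (S : 'M[R]_(p, n)) u v : vdot u (S *m v) = vdot (S^T *m u) v.
Proof. by rewrite /vdot trmx_mul trmxK mulmxA. Qed.

Lemma wnorm2E n (S : 'M[R]_n) v : wnorm2 S v = vdot v (S *m v).
Proof. by rewrite /wnorm2 /vdot mulmxA. Qed.

Lemma wnorm2B n (S1 S2 : 'M[R]_n) v : wnorm2 (S1 - S2) v = wnorm2 S1 v - wnorm2 S2 v.
Proof. by rewrite !wnorm2E mulmxBl vdotBr. Qed.

Lemma wnorm2Z n a (S : 'M[R]_n) v : wnorm2 (a *: S) v = a * wnorm2 S v.
Proof. by rewrite !wnorm2E -scalemxAl vdotZr. Qed.

Lemma wnorm2_id n (v : 'cV[R]_n) : wnorm2 1%:M v = sqnorm v.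
Proof. by rewrite wnorm2E mul1mx. Qed.

Lemma sqnorm_mulmx p n (S : 'M[R]_(p, n)) v : sqnorm (S *m v) = wnorm2 (S^T *m S) v.
Proof. by rewrite wnorm2E /sqnorm vdot_mulmx vdotC mulmxA. Qed.

Lemma wnorm2B_sym n (S : 'M[R]_n) v w : S^T = S ->
  wnorm2 S (v - w) = wnorm2 S v - 2 * vdot v (S *m w) + wnorm2 S w.
Proof.
move=> S_sym; rewrite !wnorm2E mulmxBr !vdotBl !vdotBr.
by rewrite [vdot w (S *m v)]vdot_mulmx S_sym (vdotC (S *m w)); ring.
Qed.

Lemma sqnorm_ge0 n (u : 'cV[R]_n) : 0 <= sqnorm u.
Proof. by rewrite /sqnorm vdotE sumr_ge0 // => i _; rewrite -expr2 sqr_ge0. Qed.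

Lemma sqnorm_eq0 n (u : 'cV[R]_n) : (sqnorm u == 0) = (u == 0).
Proof.
apply/idP/eqP => [|->]; last by rewrite /sqnorm vdot0r.
rewrite /sqnorm vdotE psumr_eq0 => [/allP u0|i _]; last by rewrite -expr2 sqr_ge0.
apply/matrixP => i j; rewrite ord1 mxE.
by have := u0 i (mem_index_enum _); rewrite -expr2 sqrf_eq0 => /eqP.
Qed.

Lemma sqnormZ n a (u : 'cV[R]_n) : sqnorm (a *: u) = a ^+ 2 * sqnorm u.
Proof. by rewrite /sqnorm vdotZl vdotZr mulrA expr2. Qed.

Lemma sqnormN n (u : 'cV[R]_n) : sqnorm (- u) = sqnorm u.
Proof. by rewrite -scaleN1r sqnormZ sqrrN expr1n mul1r. Qed.

Lemma sqnormD n (u v : 'cV[R]_n) : sqnorm (u + v) = sqnorm u + 2 * vdot u v + sqnorm v.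
Proof. rewrite /sqnorm !vdotDl !vdotDr (vdotC v u); ring. Qed.

Lemma sqnormB n (u v : 'cV[R]_n) : sqnorm (u - v) = sqnorm u - 2 * vdot u v + sqnorm v.
Proof. by rewrite sqnormD -scaleN1r sqnormZ vdotZr; ring. Qed.

Lemma vdot_young n (u v : 'cV[R]_n) c : 0 < c ->
  2 * vdot u v <= c * sqnorm u + c^-1 * sqnorm v.
Proof.
move=> c_gt0; have cV_ge0 : 0 <= c^-1 by rewrite invr_ge0 ltW.
have := mulr_ge0 cV_ge0 (sqnorm_ge0 (c *: u - v)); rewrite sqnormB sqnormZ vdotZl.
have -> : c^-1 * (c ^+ 2 * sqnorm u - 2 * (c * vdot u v) + sqnorm v)
    = c * sqnorm u - 2 * vdot u v + c^-1 * sqnorm v by field; rewrite gt_eqF.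
lra.
Qed.

Lemma sqnormD_le n (u v : 'cV[R]_n) : sqnorm (u + v) <= 2 * sqnorm u + 2 * sqnorm v.
Proof. by have := vdot_young u v ltr01; rewrite sqnormD invr1; lra. Qed.

Lemma sqnormB_le n (u v : 'cV[R]_n) : sqnorm (u - v) <= 2 * sqnorm u + 2 * sqnorm v.
Proof. by rewrite -(sqnormN v) sqnormD_le. Qed.

End Vdot.

Lemma psd_eigenvalue_ge0 (R : realType) n (S : 'M[R]_n) a : S^T = S ->
  (forall v, 0 <= wnorm2 S v) -> eigenvalue S a -> 0 <= a.
Proof.
move=> S_sym S_psd /eigenvalueP [v Sv v_neq0].
have SvT : S *m v^T = a *: v^T by rewrite -[S]S_sym -trmx_mul Sv linearZ.
have vT_gt0 : 0 < sqnorm v^T.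
  by rewrite lt_def sqnorm_ge0 sqnorm_eq0 -trmx0 (inj_eq trmx_inj) v_neq0.
by have := S_psd v^T; rewrite wnorm2E SvT vdotZr pmulr_lge0.
Qed.

Section SymmetricForms.
Variables (R : realType) (n : nat).
Implicit Types (S : 'M[R]_n.+1) (v : 'cV[R]_n.+1).

Lemma wnorm2_horner_ge0 S (p : {poly R}) v : S^T = S ->
  (forall a, eigenvalue S a -> 0 <= p.[a]) -> 0 <= wnorm2 (horner_mx S p) v.
Proof.
move=> S_sym p_ge0; have [d [d_eig spec]] := sym_wnorm2_spectral S_sym.
have [w [w_ge0 ->]] := spec v.
by apply: sumr_ge0 => i _; rewrite mulr_ge0 ?p_ge0.
Qed.

Lemma wnorm2_horner_le S (p q : {poly R}) v : S^T = S ->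
  (forall a, eigenvalue S a -> q.[a] <= p.[a]) ->
  wnorm2 (horner_mx S q) v <= wnorm2 (horner_mx S p) v.
Proof.
move=> S_sym qp; rewrite -subr_ge0 -wnorm2B -rmorphB.
by apply: wnorm2_horner_ge0 => // a /qp; rewrite hornerD hornerN subr_ge0.
Qed.

Lemma sym_wnorm2_bound S : S^T = S ->
  exists K, 0 <= K /\ forall v, wnorm2 S v <= K * sqnorm v.
Proof.
move=> S_sym; have [d [_ spec]] := sym_wnorm2_spectral S_sym.
exists (\sum_i `|d i|); split => [|v]; first exact: sumr_ge0.
have [w [w_ge0 hw]] := spec v.
rewrite -[S]horner_mx_X hw -wnorm2_id -(horner_mx_C S) hw mulr_sumr.
apply: ler_sum => i _; rewrite hornerX hornerC mul1r ler_wpM2r //.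
by rewrite (le_trans (ler_norm _)) // (bigD1 i) //= lerDl sumr_ge0.
Qed.

Lemma psd_wnorm2_le_sqnorm_mulmx S : S^T = S -> (forall v, 0 <= wnorm2 S v) ->
  exists K, 0 < K /\ forall v, wnorm2 S v <= K * sqnorm (S *m v).
Proof.
move=> S_sym S_psd; have [d [d_eig spec]] := sym_wnorm2_spectral S_sym.
have d_ge0 i : 0 <= d i := psd_eigenvalue_ge0 S_sym S_psd (d_eig i).
have dV_ge0 i : 0 <= (d i)^-1 by rewrite invr_ge0.
exists (1 + \sum_i (d i)^-1); split => [|v].
  by apply: (lt_le_trans ltr01); rewrite lerDl sumr_ge0.
have [w [w_ge0 hw]] := spec v.
rewrite sqnorm_mulmx S_sym mulmxE -[S]horner_mx_X -rmorphM hw hw mulr_sumr.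
apply: ler_sum => i _; rewrite hornerM hornerX mulrA ler_wpM2r //.
have [->|di_neq0] := eqVneq (d i) 0; first by rewrite !mul0r mulr0.
have dV_le : (d i)^-1 <= 1 + \sum_j (d j)^-1.
  by rewrite (bigD1 i) //= addrCA lerDl addr_ge0 // sumr_ge0.
rewrite mulrA -[X in X <= _]mul1r ler_wpM2r //.
by rewrite -[X in X <= _](mulVf di_neq0) ler_wpM2r.
Qed.

End SymmetricForms.

Lemma sqnorm_mulmx_bound (R : realType) p n (S : 'M[R]_(p, n.+1)) :
  exists K, 0 <= K /\ forall v, sqnorm (S *m v) <= K * sqnorm v.
Proof.
have [K [K_ge0 hK]] : exists K, 0 <= K /\ forall v, wnorm2 (S^T *m S) v <= K * sqnorm v.
  by apply: sym_wnorm2_bound; rewrite trmx_mul trmxK.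
by exists K; split => // v; rewrite sqnorm_mulmx.
Qed.

Lemma sqnorm_mulmx_le_eig (R : realType) p n (A : 'M[R]_(p, n.+1)) r :
  (forall a, eigenvalue (A^T *m A) a -> a <= r) ->
  forall v, sqnorm (A *m v) <= r * sqnorm v.
Proof.
move=> r_max v; have S_sym : (A^T *m A)^T = A^T *m A by rewrite trmx_mul trmxK.
have := wnorm2_horner_le (p := r%:P) (q := 'X) v S_sym.
rewrite horner_mx_X horner_mx_C sqnorm_mulmx -wnorm2_id -wnorm2Z scalemx1; apply.
by move=> a /r_max; rewrite hornerX hornerC.
Qed.

Section GeometricRatio.
Variable R : realType.
Implicit Types (a b : R) (T : nat).

Lemma sum_exprn_ge1 a T : 0 <= a -> (0 < T)%N -> 1 <= \sum_(t < T) a ^+ t.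
Proof.
move=> a_ge0; case: T => // T _; rewrite big_ord_recl expr0 lerDl.
by apply: sumr_ge0 => i _; apply: exprn_ge0.
Qed.

Lemma geo_cross_le a b T : 0 <= b -> b <= a ->
  b ^+ T * \sum_(t < T) a ^+ t <= a ^+ T * \sum_(t < T) b ^+ t.
Proof.
move=> b_ge0 ba; rewrite !mulr_sumr; apply: ler_sum => -[t /ltnW tT] _ /=.
move: (T - t)%N (subnK tT) => k <-.
rewrite !exprD mulrAC [X in _ <= X]mulrAC -!mulrA [b ^+ t * _]mulrC.
apply: ler_wpM2r; first by rewrite mulr_ge0 ?exprn_ge0 // (le_trans b_ge0).
by rewrite lerXn2r ?nnegrE // (le_trans b_ge0).
Qed.

(* The eigenvalues of [Mmat B alpha T] are the ratios [w ^+ T / \sum_(t < T) w ^+ t]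
   at the eigenvalues [w] of [1 - alpha B]. *)
Lemma geo_ratio_le a b T : 0 < b -> b <= a -> (0 < T)%N ->
  b ^+ T / \sum_(t < T) b ^+ t <= a ^+ T / \sum_(t < T) a ^+ t.
Proof.
move=> b_gt0 ba T_gt0.
have sum_gt0 (c : R) : 0 < c -> 0 < \sum_(t < T) c ^+ t.
  by move=> c_gt0; exact: lt_le_trans ltr01 (sum_exprn_ge1 (ltW c_gt0) T_gt0).
rewrite ler_pdivrMr ?sum_gt0 // mulrAC ler_pdivlMr ?sum_gt0 ?(lt_le_trans b_gt0) //.
exact: geo_cross_le (ltW b_gt0) ba.
Qed.

Lemma lt_exprn_of_powR_inv q b T : 0 <= q -> (0 < T)%N ->
  powR q (T%:R)^-1 < b -> q < b ^+ T.
Proof.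
move=> q_ge0 T_gt0 lt_b; have r_ge0 := powR_ge0 q (T%:R)^-1.
have <- : powR q (T%:R)^-1 ^+ T = q.
  by rewrite -powR_mulrn // -powRrM mulVf ?powRr1 // pnatr_eq0 -lt0n.
by rewrite ltrXn2r // -lt0n.
Qed.

Lemma alpha_bound_lt_geo_ratio (alpha rho L eta : R) T :
  0 < alpha -> 0 < rho -> 0 < eta -> (0 < T)%N ->
  alpha < (1 - powR (L ^+ 2 / (L ^+ 2 + eta * rho)) (T%:R)^-1) / rho ->
  alpha * L ^+ 2 / eta <
    (1 - alpha * rho) ^+ T / \sum_(t < T) (1 - alpha * rho) ^+ t.
Proof.
move=> alpha_gt0 rho_gt0 eta_gt0 T_gt0 alpha_lt.
set q := L ^+ 2 / _ in alpha_lt; set b := 1 - alpha * rho; set s := \sum_(t < T) b ^+ t.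
have den_gt0 : 0 < L ^+ 2 + eta * rho by rewrite ltr_wpDl ?sqr_ge0 ?mulr_gt0.
have q_ge0 : 0 <= q by rewrite divr_ge0 ?sqr_ge0 ?ltW.
have r_lt_b : powR q (T%:R)^-1 < b.
  by move: alpha_lt; rewrite ltr_pdivlMr // /b; lra.
have b_gt0 : 0 < b := le_lt_trans (powR_ge0 _ _) r_lt_b.
have := lt_exprn_of_powR_inv q_ge0 T_gt0 r_lt_b; rewrite ltr_pdivrMr // => L2_lt.
have s_gt0 : 0 < s := lt_le_trans ltr01 (sum_exprn_ge1 (ltW b_gt0) T_gt0).
have geo : alpha * rho * s = 1 - b ^+ T.
  by rewrite -[1 - _]opprB subrX1 -/s /b; ring.
have key : alpha * L ^+ 2 * s * rho < b ^+ T * eta * rho.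
  have -> : alpha * L ^+ 2 * s * rho = L ^+ 2 * (alpha * rho * s) by ring.
  by rewrite geo; lra.
rewrite ltr_pdivlMr // mulrAC ltr_pdivrMr //.
by rewrite -(ltr_pM2r rho_gt0).
Qed.

End GeometricRatio.

Lemma trmx_horner_mx (R : comNzRingType) n (S : 'M[R]_n.+1) p :
  S^T = S -> (horner_mx S p)^T = horner_mx S p.
Proof.
move=> S_sym; elim/poly_ind: p => [|p c IHp]; first by rewrite rmorph0 trmx0.
have SpS := comm_horner_mx2 S p 'X; rewrite horner_mx_X in SpS.
rewrite rmorphD rmorphM /= horner_mx_X horner_mx_C raddfD /= tr_scalar_mx.
have -> : (horner_mx S p * S)^T = S^T *m (horner_mx S p)^T by exact: trmx_mul.
by rewrite S_sym IHp mulmxE SpS.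
Qed.

Section FlexPDMatrices.
Variables (R : realType) (n : nat) (B : 'M[R]_n.+1) (alpha rhoB : R) (T : nat).
Hypotheses (B_sym : B^T = B) (rhoB_max : forall a, eigenvalue B a -> a <= rhoB).
Hypotheses (alpha_gt0 : 0 < alpha) (b_gt0 : 0 < 1 - alpha * rhoB) (T_gt0 : (0 < T)%N).

Local Notation W := (1%:M - alpha *: B).
Local Notation C := (Cmat B alpha T).
Local Notation M := (Mmat B alpha T).
Let pW : {poly R} := 1 - alpha *: 'X.
Let pC : {poly R} := \sum_(t < T) pW ^+ t.

Lemma horner_mx_pW : horner_mx B pW = W.
Proof. by rewrite rmorphB /= rmorph1 linearZ /= horner_mx_X. Qed.

Lemma horner_mx_pC : horner_mx B pC = C.
Proof. by rewrite rmorph_sum; apply: eq_bigr => t _; rewrite rmorphXn /= horner_mx_pW. Qed.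

Lemma hornerpW s : pW.[s] = 1 - alpha * s.
Proof. by rewrite !hornerE. Qed.

Lemma hornerpC s : pC.[s] = \sum_(t < T) (1 - alpha * s) ^+ t.
Proof. by rewrite horner_sum; apply: eq_bigr => t _; rewrite horner_exp hornerpW. Qed.

Lemma eigenvalue_shift_ge s : eigenvalue B s -> 1 - alpha * rhoB <= 1 - alpha * s.
Proof. by move=> /rhoB_max s_le; rewrite lerB // ler_wpM2l // ltW. Qed.

Lemma trmx_Cmat : C^T = C.
Proof. by rewrite -horner_mx_pC trmx_horner_mx. Qed.

Lemma sqnorm_le_wnorm2_Cmat v : sqnorm v <= wnorm2 C v.
Proof.
rewrite -wnorm2_id -(horner_mx_C B) -horner_mx_pC; apply: wnorm2_horner_le => // s s_eig.
rewrite hornerC hornerpC; apply: sum_exprn_ge1 => //.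
exact: le_trans (ltW b_gt0) (eigenvalue_shift_ge s_eig).
Qed.

Lemma Cmat_unit : C \in unitmx.
Proof.
rewrite unitmxE unitfE; apply/det0P => -[v v_neq0 vC].
have CvT : C *m v^T = 0 by rewrite -trmx_Cmat -trmx_mul vC trmx0.
have := sqnorm_le_wnorm2_Cmat v^T; rewrite wnorm2E CvT vdot0r.
rewrite le_eqVlt sqnorm_eq0 -trmx0 (inj_eq trmx_inj) (negPf v_neq0) /=.
by rewrite ltNge sqnorm_ge0.
Qed.

Lemma invmx_Cmat : invmx C = M + alpha *: B.
Proof.
have geo : pC * (1 - pW) = 1 - pW ^+ T.
  by rewrite mulrC -[1 - pW]opprB mulNr -subrX1 opprB.
have aB : horner_mx B (1 - pW) = alpha *: B.
  rewrite rmorphB /= rmorph1 horner_mx_pW.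
  by change (1%:M - (1%:M - alpha *: B) = alpha *: B); rewrite subKr.
have CB : C *m horner_mx B (1 - pW) = 1%:M - W ^+ T.
  by rewrite -horner_mx_pC mulmxE -rmorphM geo rmorphB /= rmorph1 rmorphXn /= horner_mx_pW.
rewrite aB in CB; rewrite -[RHS](mulKmx Cmat_unit) mulmxDr CB /Mmat mulmxA mulmxV ?Cmat_unit //.
by rewrite mul1mx addrC subrK mulmx1.
Qed.

Lemma trmx_Mmat : M^T = M.
Proof.
have -> : M = invmx C - alpha *: B by rewrite invmx_Cmat addrK.
by rewrite linearB /= linearZ /= trmx_inv trmx_Cmat B_sym.
Qed.

Lemma Mmat_wnorm2_ge u :
  (1 - alpha * rhoB) ^+ T / (\sum_(t < T) (1 - alpha * rhoB) ^+ t) * sqnorm u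
  <= wnorm2 M u.
Proof.
pose y := invmx C *m u.
have u_y : u = C *m y by rewrite mulKVmx ?Cmat_unit.
have MC : M *m C = W ^+ T.
  have WC : GRing.comm (W ^+ T) C.
    by apply: commr_sum => t _; rewrite /GRing.comm -!exprD addnC.
  by rewrite /Mmat -mulmxA mulmxE WC -mulmxE mulmxA mulVmx ?Cmat_unit ?mul1mx.
have -> : wnorm2 M u = wnorm2 (horner_mx B (pC * pW ^+ T)) y.
  rewrite !wnorm2E u_y mulmxA MC vdotC vdot_mulmx trmx_Cmat vdotC.
  by rewrite rmorphM rmorphXn /= horner_mx_pC horner_mx_pW mulmxA.
rewrite u_y sqnorm_mulmx trmx_Cmat -wnorm2Z mulmxE -horner_mx_pC -rmorphM -linearZ /=.
apply: wnorm2_horner_le => // s s_eig.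
rewrite hornerZ !hornerM horner_exp hornerpC hornerpW.
have b_le := eigenvalue_shift_ge s_eig; set a := 1 - alpha * s in b_le *.
have sum_gt0 : 0 < \sum_(t < T) a ^+ t.
  exact: lt_le_trans ltr01 (sum_exprn_ge1 (le_trans (ltW b_gt0) b_le) T_gt0).
rewrite mulrA [X in _ <= X]mulrC; apply: ler_wpM2r; first exact: ltW.
by rewrite -ler_pdivlMr // geo_ratio_le.
Qed.

End FlexPDMatrices.

Section DiagonalBounds.
Variables (R : realType) (n : nat) (dv : 'rV[R]_n) (m L : R).
Hypotheses (m_ge0 : 0 <= m) (dv_bounds : forall i, m <= dv 0 i <= L).
Local Notation D := (diag_mx dv).

Lemma vdot_diag_ge v : m * sqnorm v <= vdot v (D *m v).
Proof.
rewrite /sqnorm !vdotE mulr_sumr; apply: ler_sum => i _.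
rewrite mul_diag_mx mxE [X in _ <= X]mulrCA; apply: ler_wpM2r; first by rewrite -expr2 sqr_ge0.
by case/andP: (dv_bounds i).
Qed.

Lemma sqnorm_diag_le v : sqnorm (D *m v) <= L ^+ 2 * sqnorm v.
Proof.
rewrite /sqnorm !vdotE mulr_sumr; apply: ler_sum => i _.
rewrite mul_diag_mx mxE mulrACA -expr2; apply: ler_wpM2r; first by rewrite -expr2 sqr_ge0.
case/andP: (dv_bounds i) => mi iL; have di_ge0 := le_trans m_ge0 mi.
by rewrite ler_sqr ?nnegrE ?(le_trans di_ge0 iL).
Qed.

Lemma vdot_diag_sub_ge eta v u : 0 < eta ->
  (2 * m - eta) * sqnorm v - L ^+ 2 / eta * sqnorm u <= 2 * vdot v (D *m (v - u)).
Proof.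
move=> eta_gt0; have := vdot_diag_ge v; have := vdot_young v (D *m u) eta_gt0.
have : eta^-1 * sqnorm (D *m u) <= eta^-1 * (L ^+ 2 * sqnorm u).
  by apply: ler_wpM2l; [rewrite invr_ge0 ltW | exact: sqnorm_diag_le].
rewrite mulmxBr vdotBr mulrAC; lra.
Qed.

End DiagonalBounds.

Lemma le_contraction (R : realFieldType) (V0 V1 s c K : R) : 0 < c -> 0 < K ->
  c * s <= V0 - V1 -> V1 <= K * s -> V1 <= (1 + c / K)^-1 * V0.
Proof.
move=> c_gt0 K_gt0 decr up.
rewrite ler_pdivlMl ?addr_gt0 ?divr_gt0 // -(ler_pM2l K_gt0).
have -> : K * ((1 + c / K) * V1) = K * V1 + c * V1 by field; exact: lt0r_neq0.
have := ler_wpM2l (ltW c_gt0) up; have := ler_wpM2l (ltW K_gt0) decr; lra.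
Qed.

Section ErrorContraction.
Variables (R : realType) (n eps : nat) (A : 'M[R]_(eps, n.+1)) (B M : 'M[R]_n.+1).
Variables (m L alpha beta eta rhoA cM : R).
Hypotheses (m_gt0 : 0 < m) (alpha_gt0 : 0 < alpha) (beta_gt0 : 0 < beta) (eta_gt0 : 0 < eta).
Hypotheses (M_sym : M^T = M) (M_ge : forall u, cM * sqnorm u <= wnorm2 M u).
Hypotheses (B_psd : forall u, 0 <= wnorm2 B u).
Hypotheses (A_le : forall u, sqnorm (A *m u) <= rhoA * sqnorm u).
Hypotheses (alpha_lt : alpha * L ^+ 2 / eta < cM) (beta_lt : beta * rhoA < 2 * m - eta).

Definition lyapunov (e : 'cV[R]_n.+1) (mu : 'cV[R]_eps) : R :=
  wnorm2 M e + alpha / beta * sqnorm mu.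

(* The error recursion of FlexPD-C, with the gradient difference written as
   [diag_mx dv *m e] by the mean value theorem. *)
Definition error_step (e e1 : 'cV[R]_n.+1) (mu mu1 : 'cV[R]_eps) (dv : 'rV[R]_n.+1) :=
  [/\ forall i, m <= dv 0 i <= L,
      M *m (e1 - e) + alpha *: (B *m e1) + alpha *: (diag_mx dv *m e)
        + alpha *: (A^T *m mu) = 0
    & mu1 = mu + beta *: (A *m e1)].

Lemma lyapunov_identity e e1 mu mu1 dv : error_step e e1 mu mu1 dv ->
  lyapunov e mu - lyapunov e1 mu1 = wnorm2 M (e1 - e) + 2 * alpha * wnorm2 B e1
    + 2 * alpha * vdot e1 (diag_mx dv *m e) - alpha * beta * sqnorm (A *m e1).
Proof.
case=> _ step_eq ->; have := congr1 (vdot e1) step_eq.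
rewrite vdot0r !vdotDr !vdotZr [vdot e1 (A^T *m mu)]vdot_mulmx trmxK => orth.
have EM := wnorm2B_sym e1 (e1 - e) M_sym; rewrite subKr in EM.
rewrite /lyapunov EM sqnormD sqnormZ vdotZr (vdotC mu) !wnorm2E.
have -> : vdot e1 (M *m (e1 - e)) = - (alpha * vdot e1 (B *m e1)
    + alpha * vdot e1 (diag_mx dv *m e) + alpha * vdot (A *m e1) mu) by lra.
by field; exact: lt0r_neq0.
Qed.

Lemma lyapunov_decrease e e1 mu mu1 dv : error_step e e1 mu mu1 dv ->
  (cM - alpha * L ^+ 2 / eta) * sqnorm (e1 - e)
    + alpha * (2 * m - eta - beta * rhoA) * sqnorm e1
  <= lyapunov e mu - lyapunov e1 mu1.
Proof.
move=> step; rewrite (lyapunov_identity step); case: step => dv_bounds _ _.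
have cross := vdot_diag_sub_ge (ltW m_gt0) dv_bounds e1 (e1 - e) eta_gt0.
rewrite subKr in cross; have := ler_wpM2l (ltW alpha_gt0) cross.
have := ler_wpM2l (ltW (mulr_gt0 alpha_gt0 beta_gt0)) (A_le e1).
have := mulr_ge0 (ltW alpha_gt0) (B_psd e1); have := M_ge (e1 - e).
lra.
Qed.

Lemma sqnorm_dual_error_le e e1 mu mu1 dv KM KB KAA :
  error_step e e1 mu mu1 dv -> 0 <= KM -> 0 <= KB -> 0 <= KAA ->
  (forall v, sqnorm (M *m v) <= KM * sqnorm v) ->
  (forall v, sqnorm (B *m v) <= KB * sqnorm v) ->
  (forall v, sqnorm (A^T *m A *m v) <= KAA * sqnorm v) ->
  alpha ^+ 2 * sqnorm (A^T *m mu1) <=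
    (2 * (alpha * beta) ^+ 2 * KAA + 4 * KM + 4 * alpha ^+ 2 * (2 * KB + 4 * L ^+ 2))
    * (sqnorm (e1 - e) + sqnorm e1).
Proof.
case=> dv_bounds step_eq mu1E KM_ge0 KB_ge0 KAA_ge0 M_le B_le AA_le.
set u := e1 - e in step_eq *; set s := sqnorm u + sqnorm e1.
have u_le : sqnorm u <= s by rewrite lerDl sqnorm_ge0.
have e1_le : sqnorm e1 <= s by rewrite lerDr sqnorm_ge0.
have dual_eq : alpha *: (A^T *m mu1) = (alpha * beta) *: (A^T *m (A *m e1))
    - (M *m u + alpha *: (B *m e1 + diag_mx dv *m e)).
  rewrite mu1E mulmxDr scalerDr -scalemxAr scalerA addrC; congr (_ + _).
  by apply/eqP; rewrite -addr_eq0 addrC scalerDr !addrA step_eq.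
have De_le : sqnorm (diag_mx dv *m e) <= 2 * L ^+ 2 * s.
  rewrite -[e](subKr e1) -/u; apply: le_trans (sqnorm_diag_le (ltW m_gt0) dv_bounds _) _.
  by have := ler_wpM2l (sqr_ge0 L) (sqnormB_le e1 u); rewrite /s; lra.
have q_le : sqnorm (M *m u + alpha *: (B *m e1 + diag_mx dv *m e))
    <= (2 * KM + 2 * alpha ^+ 2 * (2 * KB + 4 * L ^+ 2)) * s.
  apply: le_trans (sqnormD_le _ _) _; rewrite sqnormZ.
  have KMs := ler_wpM2l KM_ge0 u_le; have KBs := ler_wpM2l KB_ge0 e1_le.
  have BD_le : sqnorm (B *m e1 + diag_mx dv *m e) <= (2 * KB + 4 * L ^+ 2) * s.
    by have := sqnormD_le (B *m e1) (diag_mx dv *m e); have := B_le e1; lra.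
  by have := ler_wpM2l (sqr_ge0 alpha) BD_le; have := M_le u; lra.
have p_le : sqnorm ((alpha * beta) *: (A^T *m (A *m e1))) <= (alpha * beta) ^+ 2 * KAA * s.
  rewrite sqnormZ -mulrA mulmxA; apply: ler_wpM2l; first exact: sqr_ge0.
  exact: le_trans (AA_le e1) (ler_wpM2l KAA_ge0 e1_le).
by rewrite -sqnormZ dual_eq; apply: le_trans (sqnormB_le _ _) _; lra.
Qed.

Lemma lyapunov_le : exists K, 0 < K /\ forall e e1 mu mu1 dv y,
  error_step e e1 mu mu1 dv -> mu1 = A *m y ->
  lyapunov e1 mu1 <= K * (sqnorm (e1 - e) + sqnorm e1).
Proof.
have AA_sym : (A^T *m A)^T = A^T *m A by rewrite trmx_mul trmxK.
have AA_psd v : 0 <= wnorm2 (A^T *m A) v by rewrite -sqnorm_mulmx sqnorm_ge0.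
have [KW [KW_ge0 MW_le]] := sym_wnorm2_bound M_sym.
have [KM [KM_ge0 M_le]] := sqnorm_mulmx_bound M.
have [KB [KB_ge0 B_le]] := sqnorm_mulmx_bound B.
have [KAA [KAA_ge0 AA_le]] := sqnorm_mulmx_bound (A^T *m A).
(* [mu1] lies in the range of [A], on which [A^T] is injective. *)
have [Kd [Kd_gt0 range_le]] := psd_wnorm2_le_sqnorm_mulmx AA_sym AA_psd.
set Kq := 2 * (alpha * beta) ^+ 2 * KAA + 4 * KM + 4 * alpha ^+ 2 * (2 * KB + 4 * L ^+ 2).
have Kq_ge0 : 0 <= Kq.
  have := sqr_ge0 (alpha * beta); have := sqr_ge0 alpha; have := sqr_ge0 L.
  rewrite /Kq; nra.
have ab_ge0 : 0 <= alpha / beta by rewrite divr_ge0 ?ltW.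
exists (1 + KW + alpha / beta * (Kd * (Kq / alpha ^+ 2))); split.
  have : 0 <= alpha / beta * (Kd * (Kq / alpha ^+ 2)).
    apply: mulr_ge0 => //; apply: mulr_ge0; first exact: ltW.
    by apply: divr_ge0 => //; exact: sqr_ge0.
  lra.
move=> e e1 mu mu1 dv y step mu1_y.
have dual_le := sqnorm_dual_error_le step KM_ge0 KB_ge0 KAA_ge0 M_le B_le AA_le.
have mu1_le : sqnorm mu1 <= Kd * (Kq / alpha ^+ 2 * (sqnorm (e1 - e) + sqnorm e1)).
  have := range_le y; rewrite -sqnorm_mulmx -mulmxA -mu1_y => /le_trans; apply.
  apply: ler_wpM2l; first exact: ltW.
  by rewrite mulrAC ler_pdivlMr ?exprn_gt0 // mulrC.
have := ler_wpM2l ab_ge0 mu1_le; have := MW_le e1.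
have := sqnorm_ge0 (e1 - e); have := sqnorm_ge0 e1; rewrite /lyapunov; nra.
Qed.

Lemma lyapunov_contraction : exists delta, 0 < delta /\ forall e e1 mu mu1 dv y,
  error_step e e1 mu mu1 dv -> mu1 = A *m y ->
  lyapunov e1 mu1 <= (1 + delta)^-1 * lyapunov e mu.
Proof.
set c1 := cM - alpha * L ^+ 2 / eta; set c2 := alpha * (2 * m - eta - beta * rhoA).
have c1_gt0 : 0 < c1 by rewrite subr_gt0.
have c2_gt0 : 0 < c2 by apply: mulr_gt0; rewrite // subr_gt0.
have [K [K_gt0 up]] := lyapunov_le.
exists (Num.min c1 c2 / K); split => [|e e1 mu mu1 dv y step mu1_y].
  by rewrite divr_gt0 // lt_min c1_gt0.
apply: le_contraction _ K_gt0 _ (up _ _ _ _ _ _ step mu1_y); first by rewrite lt_min c1_gt0.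
apply: le_trans (lyapunov_decrease step); rewrite mulrDr lerD // ler_wpM2r ?sqnorm_ge0 //.
  by rewrite ge_min lexx.
by rewrite ge_min lexx orbT.
Qed.

End ErrorContraction.

Lemma eigenvalue_mx0 (F : fieldType) (S : 'M[F]_0) a : ~ eigenvalue S a.
Proof. by case/eigenvalueP => v _; rewrite thinmx0 eqxx. Qed.

Lemma iter_affine (R : comNzRingType) n (W : 'M[R]_n.+1) (a : R) (c x : 'cV[R]_n.+1) T :
  iter T (fun y => W *m y - a *: c) x = W ^+ T *m x - a *: ((\sum_(t < T) W ^+ t) *m c).
Proof.
elim: T => [|T IH]; first by rewrite big_ord0 expr0 mul1mx mul0mx scaler0 subr0.
rewrite iterS IH big_ord_recl expr0 mulmxBr mulmxA -scalemxAr mulmxDl mul1mx.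
have -> : \sum_(i < T) W ^+ bump 0 i = W *m \sum_(t < T) W ^+ t.
  by rewrite mulmxE mulr_sumr; apply: eq_bigr => i _; rewrite exprS.
by rewrite exprS -[W * W ^+ T]/(W *m W ^+ T) -!mulmxA scalerDr opprD addrA addrAC.
Qed.

Lemma mvt_bounded_slope (R : realType) (g : R -> R) m L :
  (forall x, derivable g x 1) -> (forall x, m <= derive1 g x <= L) ->
  forall a b, exists c, m <= c <= L /\ g b - g a = c * (b - a).
Proof.
move=> g_derivable g'_bounds.
have slope a b : a < b -> exists c, m <= c <= L /\ g b - g a = c * (b - a).
  move=> ab; have [c _ ->] := @MVT R g (derive1 g) a b ab
    (fun x _ => ltac:(rewrite derive1E; exact: derivableP))
    (derivable_within_continuous (fun x _ => g_derivable x)).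
  by exists (derive1 g c).
move=> a b; case: (ltgtP a b) => [/slope //|/slope [c [c_bounds ba]]|<-].
- by exists c; rewrite -opprB ba -mulrN opprB.
- by exists (derive1 g a); rewrite !subrr mulr0.
Qed.

Lemma gradf_sub_diag (R : realType) n (f : 'I_n -> R -> R) m L (x y : 'cV[R]_n) :
  (forall i x, derivable (derive1 (f i)) x 1) ->
  (forall i x, m <= derive1 (derive1 (f i)) x <= L) ->
  exists dv : 'rV[R]_n, (forall i, m <= dv 0 i <= L) /\
    gradf f x - gradf f y = diag_mx dv *m (x - y).
Proof.
move=> f2_derivable f2_bounds.
have /fin_all_exists [c hc] : forall i, exists c : R, m <= c <= L /\
    derive1 (f i) (x i 0) - derive1 (f i) (y i 0) = c * (x i 0 - y i 0).
  by move=> i; exact: mvt_bounded_slope.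
exists (\row_i c i); split => [i|]; first by rewrite mxE; case: (hc i).
by apply/matrixP => i j; rewrite ord1 mul_diag_mx !mxE; case: (hc i).
Qed.

Lemma flexpd_dual_range (R : realType) n eps (f : 'I_n -> R -> R) (A : 'M[R]_(eps, n))
  B alpha beta T x0 k : exists s, (flexpd f A B alpha beta T x0 k).2 = A *m s.
Proof.
elim: k => [|k [s IH]]; first by exists 0; rewrite mulmx0.
rewrite /flexpd iterS -/(flexpd f A B alpha beta T x0 k).
case: (flexpd f A B alpha beta T x0 k) IH => x lam /= ->.
by rewrite scalemxAr -mulmxDr; eexists.
Qed.

Lemma GCdist2E (R : realType) n eps (B : 'M[R]_n.+1) alpha beta T
  (x xs : 'cV[R]_n.+1) (lam ls : 'cV[R]_eps) :
  GCdist2 B alpha beta T (x, lam) (xs, ls) =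
  lyapunov (Mmat B alpha T) alpha beta (x - xs) (lam - ls).
Proof.
rewrite /GCdist2 /wnorm2 /GCmat /= tr_col_mx mul_row_block !mulmx0 addr0 add0r.
rewrite mul_row_col mxE; congr (_ + _).
by rewrite mul_mx_scalar -scalemxAl mxE.
Qed.

Section FlexPDC.
Variables (R : realType) (n eps : nat) (f : 'I_n.+1 -> R -> R).
Variables (A : 'M[R]_(eps, n.+1)) (B : 'M[R]_n.+1) (xs : 'cV[R]_n.+1) (ls : 'cV[R]_eps).
Variables (m L alpha beta eta rhoAA rhoB : R) (T : nat).
Hypotheses (m_gt0 : 0 < m) (f2_derivable : forall i x, derivable (derive1 (f i)) x 1).
Hypotheses (f2_bounds : forall i x, m <= derive1 (derive1 (f i)) x <= L).
Hypotheses (B_sym : B^T = B) (B_psd : forall v, 0 <= wnorm2 B v).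
Hypotheses (Axs : A *m xs = 0) (Bxs : B *m xs = 0) (kkt : gradf f xs + A^T *m ls = 0).
Hypotheses (ls_range : exists u, ls = A *m u).
Hypotheses (rhoAA_max : is_largest_eig (A^T *m A) rhoAA) (rhoB_max : is_largest_eig B rhoB).
Hypotheses (T_gt0 : (0 < T)%N) (eta_gt0 : 0 < eta).
Hypotheses (beta_gt0 : 0 < beta) (beta_lt : beta < (2 * m - eta) / rhoAA).
Hypotheses (alpha_gt0 : 0 < alpha).
Hypotheses (alpha_lt : alpha < (1 - powR (L ^+ 2 / (L ^+ 2 + eta * rhoB)) (T%:R)^-1) / rhoB).

Local Notation M := (Mmat B alpha T).

(* The step-size bounds are vacuous when [rhoB] or [rhoAA] is [0], since [x / 0 = 0]. *)
Lemma rhoB_gt0 : 0 < rhoB.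
Proof.
rewrite lt_def (psd_eigenvalue_ge0 B_sym B_psd rhoB_max.1) andbT.
apply/eqP => rhoB0; move: alpha_lt; rewrite rhoB0 invr0 mulr0.
by move=> /(lt_trans alpha_gt0); rewrite ltxx.
Qed.

Lemma rhoAA_gt0 : 0 < rhoAA.
Proof.
have AA_psd v : 0 <= wnorm2 (A^T *m A) v by rewrite -sqnorm_mulmx sqnorm_ge0.
have AA_sym : (A^T *m A)^T = A^T *m A by rewrite trmx_mul trmxK.
rewrite lt_def (psd_eigenvalue_ge0 AA_sym AA_psd rhoAA_max.1) andbT.
apply/eqP => rhoAA0; move: beta_lt; rewrite rhoAA0 invr0 mulr0.
by move=> /(lt_trans beta_gt0); rewrite ltxx.
Qed.

Lemma one_sub_alpha_rhoB_gt0 : 0 < 1 - alpha * rhoB.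
Proof.
move: alpha_lt; rewrite ltr_pdivlMr ?rhoB_gt0 // subr_gt0 => /lt_le_trans; apply.
by rewrite gerBl powR_ge0.
Qed.

Lemma flexpd_error_step x lam x1 lam1 :
  flexpd_step f A B alpha beta T (x, lam) = (x1, lam1) ->
  exists dv, error_step A B M m L alpha beta (x - xs) (x1 - xs) (lam - ls) (lam1 - ls) dv.
Proof.
have B_eig := rhoB_max.2.
have C_unit := Cmat_unit B_sym B_eig alpha_gt0 one_sub_alpha_rhoB_gt0 T_gt0.
have invC := invmx_Cmat B_sym B_eig alpha_gt0 one_sub_alpha_rhoB_gt0 T_gt0.
have [dv [dv_bounds g_eq]] := gradf_sub_diag x xs f2_derivable f2_bounds.
rewrite /flexpd_step => -[x1E <-]; exists dv; split => //; last first.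
  by rewrite -x1E mulmxBr Axs subr0 addrAC.
set g := gradf f x + A^T *m lam.
have x1_eq : x1 = (1%:M - alpha *: B) ^+ T *m x - alpha *: (Cmat B alpha T *m g).
  rewrite -x1E -iter_affine; apply: eq_iter => y.
  rewrite /g mulmxBl mul1mx -scalemxAl scalerDr opprD !addrA.
  by rewrite [LHS]addrAC [X in X - _ = _]addrAC.
have Cx1 : invmx (Cmat B alpha T) *m x1 = M *m x - alpha *: g.
  by rewrite x1_eq mulmxBr mulmxA -scalemxAr mulKmx.
have Cxs : invmx (Cmat B alpha T) *m xs = M *m xs.
  by rewrite invC mulmxDl -scalemxAl Bxs scaler0 addr0.
have g_split : diag_mx dv *m (x - xs) + A^T *m (lam - ls) = g.
  by rewrite -g_eq mulmxBr addrACA -opprD kkt oppr0 addr0.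
have primal : M *m ((x1 - xs) - (x - xs)) + alpha *: (B *m (x1 - xs))
    = invmx (Cmat B alpha T) *m (x1 - xs) - M *m (x - xs).
  by rewrite invC mulmxDl -scalemxAl mulmxBr addrAC.
rewrite -addrA -scalerDr g_split primal mulmxBr Cx1 Cxs mulmxBr.
by rewrite opprB addrA subrK addrAC subrK subrr.
Qed.

Lemma flexpd_step_contraction : exists delta, 0 < delta /\ forall x lam s, lam = A *m s ->
  GCdist2 B alpha beta T (flexpd_step f A B alpha beta T (x, lam)) (xs, ls)
  <= (1 + delta)^-1 * GCdist2 B alpha beta T (x, lam) (xs, ls).
Proof.
have B_eig := rhoB_max.2.
have M_sym := trmx_Mmat B_sym B_eig alpha_gt0 one_sub_alpha_rhoB_gt0 T_gt0.
have M_ge := Mmat_wnorm2_ge B_sym B_eig alpha_gt0 one_sub_alpha_rhoB_gt0 T_gt0.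
have A_le := sqnorm_mulmx_le_eig rhoAA_max.2.
have alpha_lt' := alpha_bound_lt_geo_ratio alpha_gt0 rhoB_gt0 eta_gt0 T_gt0 alpha_lt.
have beta_lt' : beta * rhoAA < 2 * m - eta by rewrite -ltr_pdivlMr ?rhoAA_gt0.
have [delta [delta_gt0 contr]] := lyapunov_contraction m_gt0 alpha_gt0 beta_gt0 eta_gt0
  M_sym M_ge B_psd A_le alpha_lt' beta_lt'.
exists delta; split => // x lam s ->; case E : flexpd_step => [x1 lam1].
have [dv step] := flexpd_error_step E; have [u ls_u] := ls_range.
rewrite !GCdist2E; apply: (contr _ _ _ _ _ (s + beta *: x1 - u) step).
move: E; rewrite /flexpd_step => -[x1E <-].
by rewrite x1E ls_u mulmxBr mulmxDr scalemxAr.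
Qed.

End FlexPDC.

Theorem theorem3p18 (R : realType) (n eps : nat) (E : 'I_eps -> 'I_n * 'I_n)
  (f : 'I_n -> R -> R) (m L : R) (B : 'M[R]_n)
  (xs : 'cV[R]_n) (ls : 'cV[R]_eps) (alpha beta eta4 rhoAA rhoB : R) (T : nat)
  (x0 : 'cV[R]_n) :
  simple_graph E -> connected_graph E ->
  0 < m -> m <= L ->
  (forall i x, derivable (f i) x 1) ->
  (forall i x, derivable (derive1 (f i)) x 1) ->
  (forall i x, m <= derive1 (derive1 (f i)) x <= L) ->
  B^T = B ->
  (forall v : 'cV[R]_n, 0 <= wnorm2 B v) ->
  (forall v : 'cV[R]_n, B *m v = 0 <-> incidence R E *m v = 0) ->
  (forall i j, i != j -> B i j != 0 -> adj E i j) ->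
  incidence R E *m xs = 0 ->
  (forall x : 'cV[R]_n, incidence R E *m x = 0 -> fsum f xs <= fsum f x) ->
  (forall x : 'cV[R]_n, incidence R E *m x = 0 -> fsum f x <= fsum f xs -> x = xs) ->
  gradf f xs + (incidence R E)^T *m ls = 0 ->
  B *m xs = 0 ->
  (exists u : 'cV[R]_n, ls = incidence R E *m u) ->
  is_largest_eig ((incidence R E)^T *m incidence R E) rhoAA ->
  is_largest_eig B rhoB ->
  (0 < T)%N ->
  0 < eta4 < 2 * m ->
  0 < beta < (2 * m - eta4) / rhoAA ->
  0 < alpha < (1 - powR (L ^+ 2 / (L ^+ 2 + eta4 * rhoB)) (T%:R)^-1) / rhoB ->
  exists deltaC : R, 0 < deltaC /\
    forall k : nat,
      GCdist2 B alpha beta T (flexpd f (incidence R E) B alpha beta T x0 k.+1) (xs, ls)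
      <= (1 + deltaC)^-1 *
         GCdist2 B alpha beta T (flexpd f (incidence R E) B alpha beta T x0 k) (xs, ls).
Proof.
move=> _ _ m_gt0 _ _ f2_derivable f2_bounds B_sym B_psd _ _ Axs _ _ kkt Bxs ls_range
  rhoAA_max rhoB_max T_gt0 /andP[eta_gt0 _] /andP[beta_gt0 beta_lt] /andP[alpha_gt0 alpha_lt].
destruct n as [|n]; first by have [/eigenvalue_mx0] := rhoB_max.
have [delta [delta_gt0 step]] := flexpd_step_contraction m_gt0 f2_derivable f2_bounds
  B_sym B_psd Axs Bxs kkt ls_range rhoAA_max rhoB_max T_gt0 eta_gt0 beta_gt0 beta_lt
  alpha_gt0 alpha_lt.
exists delta; split => // k.
have [s lam_s] := flexpd_dual_range f (incidence R E) B alpha beta T x0 k.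
rewrite /flexpd iterS -/(flexpd f (incidence R E) B alpha beta T x0 k).
case: (flexpd f (incidence R E) B alpha beta T x0 k) lam_s => x lam /= lam_s.
exact: step lam_s.
Qed.
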